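(* For every regular triangulation $T$ of $[0,1]^L$ there exists a generic fitness landscape $w:\{0,1\}^L\to\mathbb{R}_{\ge 0}$ that induces $T$ and whose fitness graph is the all arrows up graph, i.e. every edge of the cube is directed toward the endpoint with more $1$'s (so that fitness decreases with distance from the unique peak $1\cdots1$).
   Context: Genotypes $g\in\{0,1\}^L$ are vertices of $[0,1]^L$. The triangulation induced by a fitness landscape $w$ is the regular subdivision of $[0,1]^L$ obtained by projecting the upper faces of $\mathrm{conv}\{(g,w_g)\}\subset\mathbb{R}^{L+1}$; a triangulation is regular if it is induced in this way by some landscape; $w$ is generic if all $w_g$ are distinct and the induced subdivision is a triangulation. The fitness graph directs each edge between Hamming neighbours toward the genotype of higher fitness. *)

From HB Require Import structures.
From mathcomp Require Import all_boot all_order all_algebra.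
Set Implicit Arguments. Unset Strict Implicit. Unset Printing Implicit Defensive.
Import Order.TTheory GRing.Theory Num.Theory.
Local Open Scope ring_scope.

(* Genotypes: vertices g of the cube [0,1]^L, i.e. bit strings of length L. *)
Definition genotype (L : nat) := {ffun 'I_L -> bool}.

Definition coord {R : nzRingType} {L : nat} (g : genotype L) (i : 'I_L) : R :=
  (g i)%:R.

Definition aff {R : nzRingType} {L : nat} (a : 'I_L -> R) (b : R)
  (g : genotype L) : R :=
  \sum_(i < L) a i * coord g i + b.

(* A cell of the subdivision induced by w: the (nonempty) vertex set of an upper
   face of conv{(g, w g)}, i.e. the set of points where some affine function h
   with h >= w on all genotypes agrees with w. *)
Definition is_induced_cell {R : realFieldType} {L : nat}
  (w : genotype L -> R) (S : {set genotype L}) : Prop :=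
  S != set0 /\
  exists (a : 'I_L -> R) (b : R),
    forall g : genotype L, w g <= aff a b g /\ (g \in S <-> w g = aff a b g).

Definition induces {R : realFieldType} {L : nat}
  (w : genotype L -> R) (T : {set {set genotype L}}) : Prop :=
  forall S : {set genotype L}, S \in T <-> is_induced_cell w S.

Definition aff_indep {R : realFieldType} {L : nat} (S : {set genotype L}) : Prop :=
  forall c : genotype L -> R,
    (forall i : 'I_L, \sum_(g in S) c g * coord g i = 0) ->
    \sum_(g in S) c g = 0 ->
    forall g, g \in S -> c g = 0.

Definition is_triangulation (R : realFieldType) {L : nat}
  (T : {set {set genotype L}}) : Prop :=
  forall S, S \in T -> aff_indep (R := R) S.

Definition regular_triangulation (R : realFieldType) {L : nat}
  (T : {set {set genotype L}}) : Prop :=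
  exists w : genotype L -> R, induces w T /\ is_triangulation R T.

Definition generic {R : realFieldType} {L : nat} (w : genotype L -> R) : Prop :=
  injective w /\
  (forall S, is_induced_cell w S -> aff_indep (R := R) S).

Definition flip {L : nat} (g : genotype L) (i : 'I_L) : genotype L :=
  [ffun j => if j == i then ~~ g j else g j].

Definition all_arrows_up {R : realFieldType} {L : nat} (w : genotype L -> R) : Prop :=
  forall (g : genotype L) (i : 'I_L), g i = false -> w g < w (flip g i).

(* Adding an affine function to a landscape adds it to every supporting affine
   function as well, so the induced subdivision does not change.  Starting from
   any w0 inducing T, add g |-> K * (sum_i 2^i g_i) + C with C = sum_g |w0 g|
   and K > 2C: the result is strictly increasing in the binary value of g,
   which is injective and grows along every edge of the cube towards more 1's,
   and the constant C makes it nonnegative. *)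
From mathcomp Require Import all_boot all_order all_algebra.
From mathcomp Require Import zify ring lra.
Set Implicit Arguments. Unset Strict Implicit. Unset Printing Implicit Defensive.
Import Order.TTheory GRing.Theory Num.Theory.
Local Open Scope ring_scope.

Definition nat_of_bits (L : nat) (g : 'I_L -> bool) : nat :=
  (\sum_(i < L) g i * 2 ^ i)%N.

Lemma nat_of_bitsS (L : nat) (g : 'I_L.+1 -> bool) :
  nat_of_bits g = (g ord0 + (nat_of_bits (fun i => g (lift ord0 i))).*2)%N.
Proof.
rewrite /nat_of_bits big_ord_recl muln1 -muln2 big_distrl /=.
by congr (_ + _)%N; apply: eq_bigr => i _; rewrite expnS; lia.
Qed.

Lemma nat_of_bits_inj (L : nat) (g h : 'I_L -> bool) :
  nat_of_bits g = nat_of_bits h -> g =1 h.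
Proof.
elim: L g h => [|L IH] g h; first by move=> _ [].
rewrite !nat_of_bitsS => eq_gh.
have eq0 : g ord0 = h ord0.
  move/(congr1 odd): eq_gh; rewrite !oddD !odd_double !addbF.
  by case: (g ord0); case: (h ord0).
move: eq_gh; rewrite eq0 => /addnI /double_inj /IH eq_lift i.
by case: (unliftP ord0 i) => [j ->|->].
Qed.

Lemma nat_of_bits_flip (L : nat) (g : genotype L) (i : 'I_L) :
  g i = false -> nat_of_bits (flip g i) = (nat_of_bits g + 2 ^ i)%N.
Proof.
move=> gi; rewrite /nat_of_bits (bigD1 i) //= [in RHS](bigD1 i) //= !ffunE eqxx gi.
rewrite mul1n mul0n add0n addnC; congr (_ + _)%N.
by apply: eq_bigr => j /negbTE ji; rewrite ffunE ji.
Qed.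

Section AffineShift.

Variables (R : realFieldType) (L : nat).

Lemma affD (a a' : 'I_L -> R) (b b' : R) (g : genotype L) :
  aff (fun i => a i + a' i) (b + b') g = aff a b g + aff a' b' g.
Proof. by rewrite /aff; under eq_bigr do rewrite mulrDl; rewrite big_split /=; ring. Qed.

Lemma affN (a : 'I_L -> R) (b : R) (g : genotype L) :
  aff (fun i => - a i) (- b) g = - aff a b g.
Proof. by rewrite /aff; under eq_bigr do rewrite mulNr; rewrite sumrN; ring. Qed.

Lemma aff_pow2 (k b : R) (g : genotype L) :
  aff (fun i => k * (2 ^ i)%:R) b g = k * (nat_of_bits g)%:R + b.
Proof.
rewrite /aff /nat_of_bits natr_sum mulr_sumr; congr (_ + _).
by apply: eq_bigr => i _; rewrite /coord natrM; ring.
Qed.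

Lemma induced_cell_shift (w w' : genotype L -> R) (a : 'I_L -> R) (b : R) S :
  (forall g, w' g = w g + aff a b g) ->
  is_induced_cell w S -> is_induced_cell w' S.
Proof.
move=> w'E [S0 [a0 [b0 cell_ab]]]; split => //.
exists (fun i => a0 i + a i), (b0 + b) => g.
rewrite affD w'E; have [le_w eq_w] := cell_ab g; split; first lra.
by rewrite eq_w; split => ?; lra.
Qed.

Lemma induced_cell_shiftE (w w' : genotype L -> R) (a : 'I_L -> R) (b : R) S :
  (forall g, w' g = w g + aff a b g) ->
  is_induced_cell w' S <-> is_induced_cell w S.
Proof.
move=> w'E; split; last exact: induced_cell_shift.
by apply: (induced_cell_shift (a := fun i => - a i) (b := - b)) => g; rewrite affN w'E; ring.
Qed.

End AffineShift.

Lemma ltr_bounded_scaled (R : realFieldType) (x y C K : R) (m n : nat) :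
  `|x| <= C -> `|y| <= C -> 2 * C < K -> (m < n)%N ->
  x + K * m%:R < y + K * n%:R.
Proof.
rewrite !ler_norml => /andP[? ?] /andP[? ?] CK lt_mn.
have : K * m%:R + K <= K * n%:R.
  rewrite -[X in _ + X]mulr1 -mulrDr natr1 ler_wpM2l ?ler_nat //; lra.
lra.
Qed.

Theorem mainTheorem6 (R : realFieldType) (L : nat)
  (T : {set {set genotype L}}) :
  regular_triangulation R T ->
  exists w : genotype L -> R,
    (forall g, 0 <= w g) /\ generic w /\ induces w T /\
    all_arrows_up w.
Proof.
move=> [w0 [w0T T_tri]].
pose C := \sum_(g : genotype L) `|w0 g|.
have w0C g : `|w0 g| <= C.
  by rewrite /C (bigD1 g) //= lerDl; apply: sumr_ge0 => *; exact: normr_ge0.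
pose K := 2 * C + 1.
have CK : 2 * C < K by rewrite /K; lra.
pose w g := w0 g + aff (fun i => K * (2 ^ i)%:R) C g.
have w_cell S : is_induced_cell w S <-> is_induced_cell w0 S.
  exact: induced_cell_shiftE.
have w_mono (g h : genotype L) : (nat_of_bits g < nat_of_bits h)%N -> w g < w h.
  by move=> lt_gh; rewrite /w !aff_pow2 !addrA ltrD2r; exact: ltr_bounded_scaled.
exists w; split; [|split; [split|split]].
- move=> g; rewrite /w aff_pow2.
  move: (w0C g); rewrite ler_norml => /andP[? ?].
  have : 0 <= K * (nat_of_bits g)%:R by rewrite mulr_ge0 ?ler0n //; lra.
  lra.
- move=> g h eq_w; apply/ffunP; apply: nat_of_bits_inj.
  case: (ltngtP (nat_of_bits g) (nat_of_bits h)) => // /w_mono;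
    by rewrite eq_w ltxx.
- by move=> S /w_cell /w0T /T_tri.
- by move=> S; rewrite w0T w_cell.
- by move=> g i gi; apply: w_mono; rewrite nat_of_bits_flip // -{1}(addn0 (nat_of_bits g)) ltn_add2l expn_gt0.
Qed.
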